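(* Consider Algorithm NCB run with inputs $k\ge2$ and $T$ on an instance with $\mu^*\ge\frac{32\sqrt{k\log k\log T}}{\sqrt T}$. On the event $G$, no arm $j$ with $\mu_j\le\frac{6\sqrt{k\log k\log T}}{\sqrt T}$ is pulled in any round of Phase II.
   Context: Bandit setup: $k$ arms, arm $i$ a distribution on $[0,1]$ with mean $\mu_i$, $\mu^*:=\max_i\mu_i$. $\log$ is the natural logarithm. Canonical model: a $k\times T$ table $(Y_{i,s})$ of independent entries with $Y_{i,s}$ distributed as arm $i$; the $s$-th pull of arm $i$ yields $Y_{i,s}$. Let $\widehat\mu_{i,s}:=\frac1s\sum_{r=1}^sY_{i,r}$. Algorithm NCB (inputs $k,T$): $\widetilde T:=16\sqrt{\frac{kT\log T}{\log k}}$. Phase I: in each round $t\le\widetilde T$ pull a uniformly random arm. Phase II: in each round $\widetilde T<t\le T$ pull an arm maximizing $\mathrm{NCB}_i:=\widehat\mu_i+4\sqrt{\widehat\mu_i\log T/n_i}$, where $n_i$ is the number of pulls of $i$ before the round and $\widehat\mu_i$ its empirical mean (ties arbitrary). Events: $G_1$: every arm is pulled at least $\frac{\widetilde T}{2k}$ times in Phase I. $G_2$: for every arm $i$ with $\mu_i>\frac{6\sqrt{k\log k\log T}}{\sqrt T}$ and every integer $s$ with $\frac{\widetilde T}{2k}\le s\le T$, $|\mu_i-\widehat\mu_{i,s}|\le 3\sqrt{\frac{\mu_i\log T}{s}}$. $G_3$: for every arm $j$ with $\mu_j\le\frac{6\sqrt{k\log k\log T}}{\sqrt T}$ and every integer $s$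 with $\frac{\widetilde T}{2k}\le s\le T$, $\widehat\mu_{j,s}\le \frac{9\sqrt{k\log k\log T}}{\sqrt T}$. $G:=G_1\cap G_2\cap G_3$. *)

From mathcomp Require Import all_boot all_order all_algebra.
From mathcomp Require Import all_classical all_reals all_analysis.
Set Implicit Arguments. Unset Strict Implicit. Unset Printing Implicit Defensive.
Import Order.TTheory GRing.Theory Num.Theory.
Local Open Scope ring_scope.

(* Canonical model: Y i s = s-th pull of arm i (s >= 1).
   A run is a sequence a : nat -> 'I_k, a t = arm pulled in round t (t >= 1). *)
Section NCB.
Variables (R : realType) (k T : nat).

Definition Ttil : R := 16 * Num.sqrt (k%:R * T%:R * ln (T%:R : R) / ln (k%:R : R)).

Definition cthr : R :=
  Num.sqrt (k%:R * ln (k%:R : R) * ln (T%:R : R)) / Num.sqrt (T%:R : R).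

(* mu^* = max_i mu_i  (means are >= 0, so 0 is a neutral start) *)
Definition mustar (mu : 'I_k -> R) : R := \big[Num.max/0]_(i < k) mu i.

Definition muhat (Y : 'I_k -> nat -> R) (i : 'I_k) (s : nat) : R :=
  (s%:R)^-1 * \sum_(1 <= r < s.+1) Y i r.

Definition npulls (a : nat -> 'I_k) (i : 'I_k) (t : nat) : nat :=
  \sum_(1 <= s < t) (a s == i).

Definition NCBidx (Y : 'I_k -> nat -> R) (a : nat -> 'I_k) (t : nat) (i : 'I_k) : R :=
  let m := muhat Y i (npulls a i t) in
  m + 4 * Num.sqrt (m * ln (T%:R : R) / (npulls a i t)%:R).

(* a is a run of NCB: Phase I rounds (t <= Ttil) are arbitrary (uniformly random),
   Phase II rounds (Ttil < t <= T) pull an NCB maximizer (ties arbitrary). *)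
Definition NCB_run (Y : 'I_k -> nat -> R) (a : nat -> 'I_k) : Prop :=
  forall t : nat, (1 <= t <= T)%N -> Ttil < t%:R ->
    forall i : 'I_k, NCBidx Y a t i <= NCBidx Y a t (a t).

Definition phase1_pulls (a : nat -> 'I_k) (i : 'I_k) : nat :=
  \sum_(1 <= s < T.+1 | (s%:R : R) <= Ttil) (a s == i).

Definition G1 (a : nat -> 'I_k) : Prop :=
  forall i : 'I_k, Ttil / (2 * k%:R) <= (phase1_pulls a i)%:R.

Definition G2 (mu : 'I_k -> R) (Y : 'I_k -> nat -> R) : Prop :=
  forall i : 'I_k, 6 * cthr < mu i ->
  forall s : nat, Ttil / (2 * k%:R) <= s%:R -> (s <= T)%N ->
    `|mu i - muhat Y i s| <= 3 * Num.sqrt (mu i * ln (T%:R : R) / s%:R).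

Definition G3 (mu : 'I_k -> R) (Y : 'I_k -> nat -> R) : Prop :=
  forall j : 'I_k, mu j <= 6 * cthr ->
  forall s : nat, Ttil / (2 * k%:R) <= s%:R -> (s <= T)%N ->
    muhat Y j s <= 9 * cthr.

Definition G (mu : 'I_k -> R) (Y : 'I_k -> nat -> R) (a : nat -> 'I_k) : Prop :=
  G1 a /\ G2 mu Y /\ G3 mu Y.
End NCB.

From mathcomp Require Import all_boot all_order all_algebra.
From mathcomp Require Import all_classical all_reals all_analysis.
From mathcomp Require Import ring lra zify.
Import Order.TTheory GRing.Theory Num.Theory.
Local Open Scope ring_scope.

(* Since [cthr * Ttil = 16 k log T], every arm sampled at least [Ttil / 2k]
   times has [log T / n <= cthr / 8].  On [G] a bad arm then has empirical mean
   at most [9 cthr], so its NCB index is at most [15 cthr], while an arm with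
   mean [mu >= 32 cthr] has empirical mean at least [13 mu / 16 >= 26 cthr],
   which already exceeds that bound: NCB never prefers the bad arm. *)

Lemma sqrtr_le_of_le_sqr (R : rcfType) (x y : R) :
  0 <= y -> x <= y ^+ 2 -> Num.sqrt x <= y.
Proof.
by move=> y0 h; rewrite -(ger0_norm y0) -sqrtr_sqr ler_sqrt // sqr_ge0.
Qed.

Lemma ncb_index_le_of_small_mean {R : rcfType} {L n c m : R} :
  0 <= L / n -> L / n <= c / 8 -> 0 <= m -> m <= 9 * c ->
  m + 4 * Num.sqrt (m * L / n) <= 15 * c.
Proof.
move=> Ln0 Lnc m0 m9.
have c0 : 0 <= c by lra.
suff : Num.sqrt (m * L / n) <= 3 * c / 2 by lra.
apply: sqrtr_le_of_le_sqr; first lra.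
rewrite -mulrA; apply: le_trans (ler_pM m0 Ln0 m9 Lnc) _.
rewrite expr2; nra.
Qed.

Lemma empirical_mean_ge_of_concentration {R : rcfType} {L n mu m : R} :
  0 <= mu -> L / n <= mu / 256 ->
  `|mu - m| <= 3 * Num.sqrt (mu * L / n) -> 13 * mu / 16 <= m.
Proof.
move=> mu0 Lnmu dev.
have sq : Num.sqrt (mu * L / n) <= mu / 16.
  apply: sqrtr_le_of_le_sqr; first lra.
  rewrite -mulrA; apply: le_trans (ler_wpM2l mu0 Lnmu) _.
  rewrite expr2; lra.
have := le_trans (ler_norm _) dev; lra.
Qed.

Lemma ln_nat_gt0 (R : realType) {n : nat} : (2 <= n)%N -> 0 < ln (n%:R : R).
Proof. by move=> n2; apply: ln_gt0; rewrite ltr1n. Qed.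

Section Thresholds.
Context {R : realType} {k T : nat}.
Hypotheses (hk : (2 <= k)%N) (hT : (2 <= T)%N).

Let lnk_gt0 := ln_nat_gt0 R hk.
Let lnT_gt0 := ln_nat_gt0 R hT.

Lemma cthr_gt0 : 0 < cthr R k T.
Proof.
rewrite /cthr divr_gt0 // sqrtr_gt0; last by rewrite ltr0n; lia.
by rewrite !mulr_gt0 // ltr0n; lia.
Qed.

Lemma cthr_mul_Ttil : cthr R k T * Ttil R k T = 16 * k%:R * ln (T%:R : R).
Proof.
have T0 : (0 : R) <= T%:R by rewrite ler0n.
have e : 0 <= k%:R * ln (k%:R : R) * ln (T%:R : R).
  by rewrite !mulr_ge0 ?ler0n ?(ltW lnk_gt0) ?(ltW lnT_gt0).
rewrite /cthr /Ttil; apply/eqP; rewrite -(@eqrXn2 _ 2) //; last first.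
  by rewrite !mulr_ge0 ?ler0n ?(ltW lnT_gt0).
rewrite !exprMn ?exprVn !sqr_sqrtr //; last first.
  by rewrite !divr_ge0 ?mulr_ge0 ?ler0n ?(ltW lnk_gt0) ?(ltW lnT_gt0).
by apply/eqP; field; rewrite (gt_eqF lnk_gt0) pnatr_eq0; lia.
Qed.

Lemma lnT_div_le_cthr {n : R} : Ttil R k T / (2 * k%:R) <= n ->
  0 <= ln (T%:R : R) / n /\ ln (T%:R : R) / n <= cthr R k T / 8.
Proof.
move=> hn; have c0 := cthr_gt0; have lT := lnT_gt0.
have k0 : (0 : R) < k%:R by rewrite ltr0n; lia.
have e8 : cthr R k T * (Ttil R k T / (2 * k%:R)) = 8 * ln (T%:R : R).
  by rewrite mulrA cthr_mul_Ttil; field; rewrite pnatr_eq0; lia.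
have n0 : 0 < n.
  apply: lt_le_trans hn; rewrite -(pmulr_rgt0 _ c0) e8; lra.
have : cthr R k T * (Ttil R k T / (2 * k%:R)) <= cthr R k T * n by rewrite ler_pM2l.
rewrite e8 => h; split; first by rewrite divr_ge0 //; lra.
rewrite ler_pdivrMr //; lra.
Qed.

End Thresholds.

Lemma npulls_le {k : nat} (a : nat -> 'I_k) i t T :
  (t <= T.+1)%N -> (npulls a i t <= T)%N.
Proof.
move=> ht; apply: (@leq_trans (\sum_(1 <= s < t) 1)%N).
  by apply: leq_sum => s _; exact: leq_b1.
rewrite sum_nat_const_nat muln1; lia.
Qed.

Lemma phase1_pulls_le_npulls {R : realType} {k T : nat} (a : nat -> 'I_k) i t :
  (1 <= t <= T)%N -> Ttil R k T < t%:R -> (phase1_pulls R T a i <= npulls a i t)%N.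
Proof.
move=> /andP[t1 tT] ht; rewrite /phase1_pulls /npulls (big_cat_nat _ (n := t)) //=; last lia.
have -> : (\sum_(t <= s < T.+1 | ((s%:R : R) <= Ttil R k T)%R) (a s == i) = 0)%N.
  rewrite big_nat_cond big1 // => s /andP[/andP[ts _] hs]; exfalso.
  have : (t%:R : R) <= s%:R by rewrite ler_nat.
  by move: hs; lra.
by rewrite addn0 big_mkcond /=; apply: leq_sum => s _; case: ifP.
Qed.

Lemma muhat_ge0 {R : realType} {k} (Y : 'I_k -> nat -> R) i s :
  (forall i s, 0 <= Y i s) -> 0 <= muhat Y i s.
Proof.
by move=> hY; rewrite /muhat mulr_ge0 ?invr_ge0 // sumr_ge0.
Qed.

Theorem lemma3 (R : realType) (k T : nat) (hk : (2 <= k)%N) (hT : (2 <= T)%N)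
  (mu : 'I_k -> R) (Y : 'I_k -> nat -> R)
  (hmu : forall i, 0 <= mu i <= 1)
  (hY : forall i s, 0 <= Y i s <= 1)
  (hstar : 32 * cthr R k T <= mustar mu)
  (a : nat -> 'I_k) (hrun : NCB_run T Y a) (hG : G T mu Y a) :
  forall t : nat, (1 <= t <= T)%N -> Ttil R k T < t%:R ->
  forall j : 'I_k, mu j <= 6 * cthr R k T -> a t != j.
Proof.
move=> t htT ht j hj; apply/eqP => eja.
have c0 : 0 < cthr R k T := cthr_gt0 hk hT.
have /bigmax_geP[|[i _ hi]] := hstar; first lra.
case: hG => [G1 [G2 G3]].
have Y0 l s : 0 <= Y l s by case/andP: (hY l s).
have npT l : (npulls a l t <= T)%N by apply: npulls_le; case/andP: htT => _ /leqW.
have many l : Ttil R k T / (2 * k%:R) <= (npulls a l t)%:R.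
  by apply: le_trans (G1 l) _; rewrite ler_nat phase1_pulls_le_npulls.
have [Lj0 Ljc] := lnT_div_le_cthr hk hT (many j).
have [_ Lic] := lnT_div_le_cthr hk hT (many i).
have bad := ncb_index_le_of_small_mean Lj0 Ljc (muhat_ge0 _ _ _ Y0)
  (G3 j hj _ (many j) (npT j)).
have good : 13 * mu i / 16 <= muhat Y i (npulls a i t).
  have mu6 : 6 * cthr R k T < mu i by lra.
  by apply: (empirical_mean_ge_of_concentration _ _ (G2 i mu6 _ (many i) (npT i))); lra.
have := hrun t htT ht i; rewrite eja /NCBidx.
have := sqrtr_ge0 (muhat Y i (npulls a i t) * ln (T%:R : R) / (npulls a i t)%:R).
lra.
Qed.
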